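(* Let $\tau:\mathcal{D}_{\mathbf{V}_L}\to\mathcal{D}_{\mathbf{V}_H}$ be a constructive abstraction function over clusterings $\mathbb{C}$ and $\mathbb{D}$. For every intervention $\mathbf{X}_H\leftarrow\mathbf{x}_H$ with $\mathbf{X}_H\subseteq\mathbf{V}_H$ and $\mathbf{x}_H\in\mathcal{D}_{\mathbf{X}_H}$, there exist $\mathbf{X}_L$ that is a union of clusters of $\mathbb{C}$ and a value $\mathbf{x}_L\in\mathcal{D}_{\mathbf{X}_L}$ such that $\omega_\tau(\mathbf{X}_L\leftarrow\mathbf{x}_L)=(\mathbf{X}_H\leftarrow\mathbf{x}_H)$.
   Context: $\mathcal{D}_{\mathbf{X}}$ denotes the (Cartesian product) domain of a set of variables $\mathbf{X}$. An intervariable clustering of $\mathbf{V}_L$ is a set $\mathbb{C}=\{\mathbf{C}_1,\dots,\mathbf{C}_n\}$ forming a partition of a subset of $\mathbf{V}_L$; an intravariable clustering is $\mathbb{D}=\{\mathbb{D}_{\mathbf{C}_i}\}$ where $\mathbb{D}_{\mathbf{C}_i}=\{\mathcal{D}^1_{\mathbf{C}_i},\dots,\mathcal{D}^{m_i}_{\mathbf{C}_i}\}$ is a partition of $\mathcal{D}_{\mathbf{C}_i}$. A constructive abstraction function w.r.t. $\mathbb{C},\mathbb{D}$: $\mathbf{V}_H=\{V_{H,1},\dots,V_{H,n}\}$ in bijection with $\mathbb{C}$, $\mathcal{D}_{V_{H,i}}=\{v^1_{H,i},\dots,v^{m_i}_{H,i}\}$ in bijection with $\mathbb{D}_{\mathbf{C}_i}$,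 and $\tau(\mathbf{v}_L)=(\tau_{\mathbf{C}_i}(\mathbf{c}_i):\mathbf{C}_i\in\mathbb{C})$ with $\tau_{\mathbf{C}_i}(\mathbf{c}_i)=v^j_{H,i}$ iff $\mathbf{c}_i\in\mathcal{D}^j_{\mathbf{C}_i}$; for a union of clusters $\mathbf{W}_L$, $\tau(\mathbf{w}_L)=(\tau_{\mathbf{C}_i}(\mathbf{c}_i):\mathbf{C}_i\subseteq\mathbf{W}_L)$. For a set of variables $\mathbf{V}$ and a value $\mathbf{x}$ of $\mathbf{X}\subseteq\mathbf{V}$, $\mathrm{Rst}(\mathbf{V},\mathbf{x})=\{\mathbf{v}\in\mathcal{D}_{\mathbf{V}}:\mathbf{v}\text{ is consistent with }\mathbf{x}\}$; for $\mathbf{T}\subseteq\mathcal{D}_{\mathbf{V}_L}$, $\tau(\mathbf{T})=\{\tau(\mathbf{v}):\mathbf{v}\in\mathbf{T}\}$. The map $\omega_\tau$ is defined by $\omega_\tau(\mathbf{X}_L\leftarrow\mathbf{x}_L)=(\mathbf{X}_H\leftarrow\mathbf{x}_H)$ whenever $\tau(\mathrm{Rst}(\mathbf{V}_L,\mathbf{x}_L))=\mathrm{Rst}(\mathbf{V}_H,\mathbf{x}_H)$. *)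

From mathcomp Require Import all_boot.
Set Implicit Arguments. Unset Strict Implicit. Unset Printing Implicit Defensive.

Definition asg (V : finType) (Dom : V -> Type) (X : {set V}) : Type :=
  forall v : V, v \in X -> Dom v.

Definition full (V : finType) (Dom : V -> Type) : Type := forall v : V, Dom v.

(* membership of v in Rst(V, x): v is consistent with x *)
Definition consistent (V : finType) (Dom : V -> Type) (X : {set V})
  (x : asg Dom X) (f : full Dom) : Prop :=
  forall (v : V) (h : v \in X), f v = x v h.

Definition restr (V : finType) (Dom : V -> Type) (X : {set V}) (f : full Dom)
  : asg Dom X := fun v _ => f v.

Definition intervariable_clustering (V : finType) (n : nat) (C : 'I_n -> {set V})
  : Prop :=
  (forall i, C i != set0) /\ (forall i j, i != j -> [disjoint C i & C j]).

Definition is_partition (T : Type) (m : nat) (B : 'I_m -> T -> Prop) : Prop :=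
  [/\ (forall j, exists t, B j t),
      (forall t, exists j, B j t) &
      (forall j j' t, B j t -> B j' t -> j = j')].

(* Constructive abstraction: V_H = 'I_n (V_{H,i} <-> C_i), D_{V_{H,i}} = 'I_(m i)
   (v^j_{H,i} <-> block B i j), and tau_{C_i}(c) = j iff c is in block B i j. *)
Definition constructive_components (V : finType) (Dom : V -> Type) (n : nat)
  (C : 'I_n -> {set V}) (m : 'I_n -> nat)
  (B : forall i, 'I_(m i) -> asg Dom (C i) -> Prop)
  (tauC : forall i, asg Dom (C i) -> 'I_(m i)) : Prop :=
  forall i c j, tauC i c = j <-> B i j c.

Definition HDom (n : nat) (m : 'I_n -> nat) : 'I_n -> Type := fun i => 'I_(m i).

Definition tau (V : finType) (Dom : V -> Type) (n : nat)
  (C : 'I_n -> {set V}) (m : 'I_n -> nat)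
  (tauC : forall i, asg Dom (C i) -> 'I_(m i)) (f : full Dom) : full (HDom m) :=
  fun i => tauC i (@restr V Dom (C i) f).

Definition omega_maps (V : finType) (Dom : V -> Type) (n : nat)
  (C : 'I_n -> {set V}) (m : 'I_n -> nat)
  (tauC : forall i, asg Dom (C i) -> 'I_(m i))
  (XL : {set V}) (xL : asg Dom XL) (XH : {set 'I_n}) (xH : asg (HDom m) XH) : Prop :=
  forall h : full (HDom m),
    (exists f : full Dom, consistent xL f /\ @tau V Dom n C m tauC f = h) <-> consistent xH h.

From mathcomp Require Import all_boot.
From Stdlib Require Import ClassicalEpsilon FunctionalExtensionality.

(* Intervene on the clusters indexed by X_H.  Each tau_{C_i} is onto, so we
   can fix a representative c_ij of every block D^j_{C_i}; since the clusters
   are disjoint, any high-level value h is the image under tau of the low-level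
   value that equals c_{i,h_i} on each C_i.  Setting every C_i with i in X_H to
   c_{i,x_i} then produces exactly the high-level values consistent with x_H. *)

Section Assignments.
Context {V : finType} {Dom : V -> Type}.

Definition extend (f : full Dom) {X : {set V}} (x : asg Dom X) : full Dom :=
  fun v => match @idP (v \in X) with ReflectT p => x v p | ReflectF _ => f v end.

Lemma extend_in f X (x : asg Dom X) v (hv : v \in X) : extend f x v = x v hv.
Proof.
rewrite /extend; case: {-}_ / idP => [p|/(_ hv)//].
by rewrite (bool_irrelevance p hv).
Qed.

Lemma consistent_extend f X (x : asg Dom X) : consistent x (extend f x).
Proof. exact: extend_in. Qed.

Lemma asg_eq {X : {set V}} {x y : asg Dom X} :
  (forall v (hv : v \in X), x v hv = y v hv) -> x = y.
Proof.
move=> exy; apply: functional_extensionality_dep => v.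
exact: functional_extensionality_dep.
Qed.

End Assignments.

Section Gluing.
Context {V : finType} {Dom : V -> Type} {n : nat}.
Context {C : 'I_n -> {set V}} {m : 'I_n -> nat}.
Variable tauC : forall i, asg Dom (C i) -> 'I_(m i).
Hypothesis disjC : forall i j, i != j -> [disjoint C i & C j].
Variable rep : forall i, 'I_(m i) -> asg Dom (C i).
Hypothesis tauC_rep : forall i j, tauC i (rep i j) = j.
Variable def : full Dom.

Local Notation tau := (@tau V Dom n C m tauC).

Lemma tau_eq_on (f g : full Dom) i :
  (forall v, v \in C i -> f v = g v) -> tau f i = tau g i.
Proof.
by move=> efg; rewrite /tau; congr (tauC i); apply: asg_eq => v hv; exact: efg.
Qed.

Definition glue (h : full (HDom m)) : full Dom := fun v =>
  if [pick i | v \in C i] is Some i then extend def (rep i (h i)) v else def v.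

Lemma glue_in h {i v} (hv : v \in C i) : glue h v = rep i (h i) v hv.
Proof.
rewrite /glue; case: pickP => [k hk | /(_ i)]; last by rewrite hv.
have -> : k = i.
  by apply: contraTeq hv => /disjC /disjointFr ->.
exact: extend_in.
Qed.

Lemma tau_glue h : tau (glue h) = h.
Proof.
apply: functional_extensionality_dep => i; rewrite -[RHS](tauC_rep i).
rewrite /tau; congr (tauC i).
by apply: asg_eq => v hv; rewrite /restr (glue_in _ hv).
Qed.

Lemma omega_maps_glue (X : {set 'I_n}) (x : asg (HDom m) X) h0 :
  consistent x h0 ->
  omega_maps tauC (restr (glue h0) : asg Dom (\bigcup_(i in X) C i)) x.
Proof.
move=> x_h0 h; split.
- move=> [f [f_x <-]] i hi; rewrite -x_h0 -(tau_glue h0).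
  apply: tau_eq_on => v hv; apply: f_x.
  by apply/bigcupP; exists i.
- move=> x_h; exists (glue h); split; last exact: tau_glue.
  move=> v hvX; case/bigcupP: (hvX) => i hi hv.
  by rewrite /restr !(glue_in _ hv) x_h x_h0.
Qed.

End Gluing.

Lemma constructive_tauC_onto {V : finType} {Dom : V -> Type} {n : nat}
  {C : 'I_n -> {set V}} {m : 'I_n -> nat}
  {B : forall i, 'I_(m i) -> asg Dom (C i) -> Prop}
  {tauC : forall i, asg Dom (C i) -> 'I_(m i)} :
  (forall i, is_partition (B i)) -> constructive_components B tauC ->
  forall i j, exists c, tauC i c = j.
Proof. by move=> partB tauCB i j; case: (partB i) => /(_ j)[c /tauCB]; exists c. Qed.

Theorem lemma4 (V : finType) (Dom : V -> Type) (n : nat)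
  (C : 'I_n -> {set V}) (m : 'I_n -> nat)
  (B : forall i, 'I_(m i) -> asg Dom (C i) -> Prop)
  (tauC : forall i, asg Dom (C i) -> 'I_(m i)) :
  (forall v, inhabited (Dom v)) ->
  intervariable_clustering C ->
  (forall i, is_partition (B i)) ->
  @constructive_components V Dom n C m B tauC ->
  forall (XH : {set 'I_n}) (xH : asg (HDom m) XH),
  exists (S : {set 'I_n}) (xL : asg Dom (\bigcup_(i in S) C i)),
    @omega_maps V Dom n C m tauC (\bigcup_(i in S) C i) xL XH xH.
Proof.
move=> inhDom [_ disjC] partB tauCB XH xH.
pose def : full Dom := fun v => epsilon (inhDom v) (fun _ => True).
have onto := constructive_tauC_onto partB tauCB.
pose rep i j := proj1_sig (constructive_indefinite_description _ (onto i j)).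
have tauC_rep i j : tauC i (rep i j) = j.
  by rewrite /rep; case: constructive_indefinite_description.
pose h0 := extend (tau tauC def) xH.
exists XH, (restr (glue rep def h0)).
by apply: omega_maps_glue => //; apply: consistent_extend.
Qed.
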